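(* $$\{\varphi\in\mathrm{End}_K(P_n)\mid [x_i,\varphi]\in F_n,\ [y_i,\varphi]\in F_n\ \text{for all } i=1,\dots,n\}=\begin{cases}\mathbb{S}_1& n=1,\\ K+F_n & n>1.\end{cases}$$
   Context: $K$ is a field of characteristic zero. $\mathbb{S}_n$ is the $K$-algebra generated by $x_1,\dots,x_n,y_1,\dots,y_n$ with defining relations $y_ix_i=1$ and $[x_i,y_j]=[x_i,x_j]=[y_i,y_j]=0$ for $i\ne j$; it acts faithfully on $P_n=K[x_1,\dots,x_n]$ by $x_i*x^\alpha=x^{\alpha+e_i}$, $y_i*x^\alpha=x^{\alpha-e_i}$ if $\alpha_i>0$ and $0$ otherwise, so $\mathbb{S}_n\subset\mathrm{End}_K(P_n)$. For $k,l\in\mathbb{N}$, $E_{kl}(i):=x_i^ky_i^l-x_i^{k+1}y_i^{l+1}$; for $\alpha,\beta\in\mathbb{N}^n$, $E_{\alpha\beta}:=\prod_iE_{\alpha_i\beta_i}(i)$, and $F_n:=\bigoplus_{\alpha,\beta\in\mathbb{N}^n}KE_{\alpha\beta}$. *)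

From HB Require Import structures.
From mathcomp Require Import all_boot all_order all_algebra.
Set Implicit Arguments. Unset Strict Implicit. Unset Printing Implicit Defensive.
Import GRing.Theory.
Local Open Scope ring_scope.

Section Jacobson.
Variables (K : fieldType) (n : nat).

Definition mon := {ffun 'I_n -> nat}.

(* A polynomial of P_n = K[x_1..x_n] is given by its coefficient function
   alpha |-> coefficient of x^alpha, which must be finitely supported.
   Operators are maps on coefficient functions; only their restriction to
   finitely supported ones (= P_n) matters. *)
Definition coef := mon -> K.
Definition op := coef -> coef.

Definition finsupp (f : coef) : Prop :=
  exists s : seq mon, forall a, f a != 0 -> a \in s.

Definition xmon (a : mon) : coef := fun b => if b == a then 1 else 0.

Definition mon_inc (a : mon) (i : 'I_n) : mon :=
  [ffun j => if j == i then (a j).+1 else a j].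
Definition mon_dec (a : mon) (i : 'I_n) : mon :=
  [ffun j => if j == i then (a j).-1 else a j].

(* x_i * x^alpha = x^(alpha+e_i) *)
Definition xop (i : 'I_n) : op :=
  fun f b => if (0 < b i)%N then f (mon_dec b i) else 0.
(* y_i * x^alpha = x^(alpha-e_i) if alpha_i > 0, and 0 otherwise *)
Definition yop (i : 'I_n) : op := fun f b => f (mon_inc b i).

Definition op_id : op := fun f => f.
Definition op_zero : op := fun _ _ => 0.
Definition op_add (u v : op) : op := fun f b => u f b + v f b.
Definition op_opp (u : op) : op := fun f b => - u f b.
Definition op_scale (c : K) (u : op) : op := fun f b => c * u f b.
Definition op_mul (u v : op) : op := fun f => u (v f).
Definition op_comm (u v : op) : op := op_add (op_mul u v) (op_opp (op_mul v u)).
Definition op_pow (u : op) (k : nat) : op := iter k (op_mul u) op_id.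

Definition op_eq (u v : op) : Prop :=
  forall f, finsupp f -> forall b, u f b = v f b.

Definition is_End (phi : op) : Prop :=
  (forall f, finsupp f -> finsupp (phi f)) /\
  (forall (c : K) f g, finsupp f -> finsupp g ->
     forall b, phi (fun a => c * f a + g a) b = c * phi f b + phi g b).

Definition Eop (k l : nat) (i : 'I_n) : op :=
  op_add (op_mul (op_pow (xop i) k) (op_pow (yop i) l))
         (op_opp (op_mul (op_pow (xop i) k.+1) (op_pow (yop i) l.+1))).

Definition Eab (a b : mon) : op :=
  foldr (fun i u => op_mul (Eop (a i) (b i) i) u) op_id (enum 'I_n).

Definition in_F (u : op) : Prop :=
  exists s : seq (K * mon * mon),
    op_eq u (foldr (fun t v => op_add (op_scale t.1.1 (Eab t.1.2 t.2)) v)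
                   op_zero s).

Definition in_KF (u : op) : Prop :=
  exists (c : K) (g : op), in_F g /\ op_eq u (op_add (op_scale c op_id) g).

Inductive S_gen : op -> Prop :=
| S_one : S_gen op_id
| S_x i : S_gen (xop i)
| S_y i : S_gen (yop i)
| S_add u v : S_gen u -> S_gen v -> S_gen (op_add u v)
| S_scale c u : S_gen u -> S_gen (op_scale c u)
| S_mul u v : S_gen u -> S_gen v -> S_gen (op_mul u v).

Definition in_S (u : op) : Prop := exists v, S_gen v /\ op_eq u v.

End Jacobson.

(* Corollary 6.7: phi in End_K(P_n) has all [x_i,phi], [y_i,phi] in F_n iff
   phi is in S_1 (n = 1), resp. in K + F_n (n > 1).  Characteristic 0 is not used.

   An operator u is recorded by its entries u(x^b)(g); E_{ab} is the matrix
   unit, so a linear u lies in F_n iff its entries vanish at every pair (g,b)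
   "far" from the origin (some exponent exceeds a bound N).  If the
   commutators are in F_n, the relations x_i phi = phi x_i, y_i phi = phi y_i
   hold on far entries: these are invariant under (g,b) -> (g+e_i,b+e_i) and
   vanish when exactly one of g_i, b_i is 0.  For n > 1, keeping one
   coordinate far and shifting another to 0 kills every far off-diagonal
   entry, so phi - c is in F_n.  For n = 1 far entries depend only on g - b and
   vanish for |g - b| > N + 1, so phi - psi is in F_1 for an explicit psi in
   S_1, and F_1 is contained in S_1.  Conversely F_n is an S_n-bimodule, and
   [w,-] is a derivation with [x,y] = -E_{00} when n = 1.  The file develops
   these facts in this order and derives the corollary at the end. *)

From HB Require Import structures.
From mathcomp Require Import all_boot all_order all_algebra zify.
From Stdlib Require Import FunctionalExtensionality.
Set Implicit Arguments. Unset Strict Implicit. Unset Printing Implicit Defensive.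
Import GRing.Theory.
Local Open Scope ring_scope.

Section Monomials.
Variable n : nat.
Local Notation mon := (mon n).

Definition mon_addn (g : mon) (i : 'I_n) k : mon :=
  [ffun j => if j == i then (g j + k)%N else g j].
Definition mon_subn (g : mon) (i : 'I_n) k : mon :=
  [ffun j => if j == i then (g j - k)%N else g j].
Definition mon_set (g : mon) (i : 'I_n) k : mon :=
  [ffun j => if j == i then k else g j].

Lemma mon_addn0 (g : mon) i : mon_addn g i 0 = g.
Proof. by apply/ffunP => j; rewrite ffunE addn0; case: eqP => // ->. Qed.

Lemma mon_subn0 (g : mon) i : mon_subn g i 0 = g.
Proof. by apply/ffunP => j; rewrite ffunE subn0; case: eqP => // ->. Qed.

Lemma mon_addnS (g : mon) i k : mon_addn g i k.+1 = mon_inc (mon_addn g i k) i.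
Proof.
by apply/ffunP => j; rewrite !ffunE; case: (j =P i) => [->|]; rewrite ?ffunE ?eqxx ?addnS.
Qed.

Lemma mon_addn_ge (g : mon) i k j : (g j <= mon_addn g i k j)%N.
Proof. by rewrite ffunE; case: eqP => // _; apply: leq_addr. Qed.

Lemma mon_subnK (g : mon) i k : (k <= g i)%N -> mon_addn (mon_subn g i k) i k = g.
Proof.
by move=> le; apply/ffunP => j; rewrite !ffunE; case: (j =P i) => [->|//]; rewrite subnK.
Qed.

Lemma inc_dec (g : mon) i : (0 < g i)%N -> mon_inc (mon_dec g i) i = g.
Proof.
by move=> h; apply/ffunP => j; rewrite !ffunE; case: (j =P i) => [->|//]; rewrite prednK.
Qed.

Lemma dec_inc (g : mon) i : mon_dec (mon_inc g i) i = g.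
Proof. by apply/ffunP => j; rewrite !ffunE; case: (j =P i) => [->|]; rewrite ?eqxx. Qed.

Lemma inc_pos (g : mon) i : (0 < mon_inc g i i)%N.
Proof. by rewrite ffunE eqxx. Qed.

Lemma mon_inc_ge (g : mon) i j : (g j <= mon_inc g i j)%N.
Proof. by rewrite ffunE; case: eqP. Qed.

Lemma eq_dec_inc (g a : mon) i : (0 < g i)%N -> (mon_dec g i == a) = (g == mon_inc a i).
Proof. by move=> h; apply/eqP/eqP => [<-|->]; rewrite ?inc_dec ?dec_inc. Qed.

Lemma inc_eq (g a : mon) i : (mon_inc g i == a) = (0 < a i)%N && (g == mon_dec a i).
Proof.
case: (ltnP 0 (a i)) => h /=; first by rewrite eq_sym -eq_dec_inc // eq_sym.
by apply/eqP => e; move: (inc_pos g i); rewrite e; move: h; rewrite leqn0 => /eqP ->.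
Qed.

Definition far N (g b : mon) := [exists j, (N < g j)%N || (N < b j)%N].

Lemma farl N (g b : mon) j : (N < g j)%N -> far N g b.
Proof. by move=> h; apply/existsP; exists j; rewrite h. Qed.

Lemma farr N (g b : mon) j : (N < b j)%N -> far N g b.
Proof. by move=> h; apply/existsP; exists j; rewrite h orbT. Qed.

Lemma far_mono N (g b g' b' : mon) : (forall j, g j <= g' j)%N ->
  (forall j, b j <= b' j)%N -> far N g b -> far N g' b'.
Proof.
move=> hg hb /existsP[j /orP[h|h]].
- exact: farl (leq_trans h (hg j)).
- exact: farr (leq_trans h (hb j)).
Qed.

Lemma far_le N N' (g b : mon) : (N <= N')%N -> far N' g b -> far N g b.
Proof.
move=> le /existsP[j /orP[h|h]].
- exact: farl (leq_ltn_trans le h).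
- exact: farr (leq_ltn_trans le h).
Qed.

Definition box N : seq mon := undup
  [seq [ffun j => nat_of_ord (t j)] | t : {ffun 'I_n -> 'I_N.+1} <- enum {ffun 'I_n -> 'I_N.+1}].

Lemma box_uniq N : uniq (box N).
Proof. exact: undup_uniq. Qed.

Lemma in_box N (g : mon) : (forall j, g j <= N)%N -> g \in box N.
Proof.
move=> h; rewrite mem_undup; apply/mapP.
exists [ffun j => inord (g j) : 'I_N.+1]; first by rewrite mem_enum.
by apply/ffunP => j; rewrite !ffunE inordK // ltnS.
Qed.

Lemma near_in_box N (g b : mon) : ~~ far N g b -> g \in box N /\ b \in box N.
Proof.
move/existsPn => h; split; apply: in_box => j;
by move: (h j); rewrite negb_or -!leqNgt => /andP[].
Qed.

End Monomials.

Section Operators.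
Variables (K : fieldType) (n : nat).
Local Notation mon := (mon n).
Local Notation coef := (coef K n).
Local Notation op := (op K n).

Lemma xpowE i k (f : coef) g :
  op_pow (xop i) k f g = if (k <= g i)%N then f (mon_subn g i k) else 0.
Proof.
elim: k g => [|k IH] g /=; first by rewrite mon_subn0.
rewrite /op_mul /xop IH.
case: (ltnP 0 (g i)) => gi; last by move: gi; rewrite leqn0 => /eqP ->.
rewrite ffunE eqxx -subn1 leq_subRL // add1n.
case: ifP => // _; congr f; apply/ffunP => j; rewrite !ffunE.
by case: eqP => [->|] //; rewrite -subn1 -subnDA add1n.
Qed.

Lemma ypowE i k (f : coef) g : op_pow (yop i) k f g = f (mon_addn g i k).
Proof.
elim: k g => [|k IH] g /=; first by rewrite mon_addn0.
rewrite /op_mul /yop IH; congr f; apply/ffunP => j; rewrite !ffunE.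
by case: eqP => [->|]; rewrite ?ffunE ?eqxx ?addnS ?addSn.
Qed.

Lemma EopE k l i (f : coef) g :
  Eop k l i f g = if g i == k then f (mon_set g i l) else 0.
Proof.
rewrite /Eop /op_add /op_opp /op_mul !xpowE !ypowE.
case: (ltngtP k (g i)) => h; last first.
- rewrite subr0; congr f; apply/ffunP => j; rewrite !ffunE.
  by case: eqP => [->|]; rewrite ?ffunE ?eqxx // -h subnn.
- by rewrite subr0.
suff -> : mon_addn (mon_subn g i k) i l = mon_addn (mon_subn g i k.+1) i l.+1 by rewrite subrr.
apply/ffunP => j; rewrite !ffunE; case: eqP => [->|_]; rewrite ?ffunE ?eqxx //.
by rewrite addnS -addSn -subSn // subSS.
Qed.

Lemma Eab_foldE (a b : mon) (l : seq 'I_n) (f : coef) g : uniq l ->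
  foldr (fun i u => op_mul (Eop (a i) (b i) i) u) (@op_id K n) l f g =
  if all (fun i => g i == a i) l then f [ffun j => if j \in l then b j else g j] else 0.
Proof.
elim: l g => [|i l IH] g /=.
  by move=> _; rewrite /op_id; congr f; apply/ffunP => j; rewrite ffunE.
case/andP => il ul; rewrite /op_mul EopE.
case: eqP => gi //=; rewrite IH //.
have -> : all (fun j => mon_set g i (b i) j == a j) l = all (fun j => g j == a j) l.
  apply: eq_in_all => j jl; rewrite ffunE; case: (j =P i) => // ji; by rewrite -ji jl in il.
case: ifP => // _; congr f; apply/ffunP => j; rewrite !ffunE in_cons.
by case: (j =P i) => [->|_] /=; case: ifP.
Qed.

Lemma EabE (a b : mon) (f : coef) g : Eab a b f g = if g == a then f b else 0.
Proof.
rewrite /Eab Eab_foldE ?enum_uniq //.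
have -> : [ffun j => if j \in enum 'I_n then b j else g j] = b.
  by apply/ffunP => j; rewrite ffunE mem_enum.
case: ifP => h; case: eqP => e //.
- by case: e; apply/ffunP => j; move/allP: h => /(_ j); rewrite mem_enum => /(_ isT) /eqP.
- by move: h; rewrite e; move/negbT/negP; case; apply/allP => j _.
Qed.

Definition mxop (s : seq (K * mon * mon)) : op :=
  fun f g => \sum_(t <- s) t.1.1 * (if g == t.1.2 then f t.2 else 0).

Definition finite_mx (u : op) : Prop := exists s, op_eq u (mxop s).

Lemma in_FE (u : op) : in_F u <-> finite_mx u.
Proof.
have fold_mxop s f g : foldr (fun t v => op_add (op_scale t.1.1 (Eab t.1.2 t.2)) v)
    (@op_zero K n) s f g = mxop s f g.
  elim: s => [|t s IH]; first by rewrite /mxop big_nil.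
  by rewrite /= /op_add /op_scale IH EabE /mxop big_cons.
by split=> [[s h]|[s h]]; exists s => f fs g; rewrite h // fold_mxop.
Qed.

Lemma mxop_cat s1 s2 (f : coef) g : mxop (s1 ++ s2) f g = mxop s1 f g + mxop s2 f g.
Proof. by rewrite /mxop big_cat. Qed.

Lemma mxop_nil (f : coef) g : mxop [::] f g = 0.
Proof. by rewrite /mxop big_nil. Qed.

Definition mxscale (c : K) (s : seq (K * mon * mon)) :=
  [seq (c * t.1.1, t.1.2, t.2) | t : K * mon * mon <- s].

Lemma mxop_scale c s (f : coef) g : mxop (mxscale c s) f g = c * mxop s f g.
Proof. by rewrite /mxop big_map mulr_sumr; apply: eq_bigr => t _; rewrite mulrA. Qed.

Lemma mxop_sub s1 s2 (f : coef) g :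
  mxop (s1 ++ mxscale (-1) s2) f g = mxop s1 f g - mxop s2 f g.
Proof. by rewrite mxop_cat mxop_scale mulN1r. Qed.

Lemma xop_mxop i s (f : coef) g :
  xop i (mxop s f) g = mxop [seq (t.1.1, mon_inc t.1.2 i, t.2) | t : K * mon * mon <- s] f g.
Proof.
rewrite /xop /mxop big_map; case: ifP => h.
  by apply: eq_bigr => t _ /=; rewrite eq_dec_inc.
rewrite big1 // => t _ /=; case: eqP => [e|]; last by rewrite mulr0.
by move: h; rewrite e inc_pos.
Qed.

Lemma mxop_xop i s (f : coef) g :
  mxop s (xop i f) g = mxop [seq (if (0 < t.2 i)%N then t.1.1 else 0, t.1.2, mon_dec t.2 i)
                             | t : K * mon * mon <- s] f g.
Proof.
rewrite /xop /mxop big_map; apply: eq_bigr => t _ /=.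
by case: ifP; case: ifP; rewrite ?mul0r ?mulr0.
Qed.

Lemma yop_mxop i s (f : coef) g :
  yop i (mxop s f) g = mxop [seq (if (0 < t.1.2 i)%N then t.1.1 else 0, mon_dec t.1.2 i, t.2)
                             | t : K * mon * mon <- s] f g.
Proof.
rewrite /yop /mxop big_map; apply: eq_bigr => t _ /=.
by rewrite inc_eq; case: (ltnP 0 (t.1.2 i)) => h /=; rewrite ?mulr0 ?mul0r.
Qed.

Lemma mxop_yop i s (f : coef) g :
  mxop s (yop i f) g = mxop [seq (t.1.1, t.1.2, mon_inc t.2 i) | t : K * mon * mon <- s] f g.
Proof. by rewrite /mxop big_map. Qed.

End Operators.

Lemma sum_support_eq (R : nmodType) (T : eqType) (S1 S2 : seq T) (h : T -> R) :
  uniq S1 -> uniq S2 -> (forall x, h x != 0 -> (x \in S1) && (x \in S2)) ->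
  \sum_(x <- S1) h x = \sum_(x <- S2) h x.
Proof.
move=> u1 u2 H.
have E (A B : seq T) : (forall x, h x != 0 -> x \in B) ->
    \sum_(x <- A) h x = \sum_(x <- filter (mem B) A) h x.
  move=> HB; rewrite big_filter [RHS]big_mkcond /=; apply: eq_bigr => x _.
  by case: ifP => // xB; apply/eqP; apply: contraFT xB => /HB.
rewrite (E S1 S2) => [|x /H /andP[]//]; rewrite (E S2 S1) => [|x /H /andP[]//].
apply: perm_big; apply: uniq_perm; rewrite ?filter_uniq // => x.
by rewrite !mem_filter andbC.
Qed.

Lemma sum_if_eq (R : nmodType) (T : eqType) (S : seq T) (d : T) (A : T -> R) :
  uniq S ->
  \sum_(x <- S) (if d == x then A x else 0) = if d \in S then A d else 0.
Proof.
elim: S => [|x S IH]; first by rewrite big_nil.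
case/andP => xS uS; rewrite big_cons IH // in_cons.
case: (d =P x) => [->|_] /=; last by rewrite add0r.
by rewrite (negbTE xS) addr0.
Qed.

Section Linearity.
Variables (K : fieldType) (n : nat).
Local Notation mon := (mon n).
Local Notation coef := (coef K n).
Local Notation op := (op K n).

Definition op_linear (u : op) : Prop := forall (c : K) (f h : coef) g,
  u (fun a => c * f a + h a) g = c * u f g + u h g.

Definition fs_linear (u : op) : Prop := forall (c : K) (f h : coef),
  finsupp f -> finsupp h -> forall g, u (fun a => c * f a + h a) g = c * u f g + u h g.

Section OpLinear.
Variable u : op.
Hypothesis Lu : op_linear u.

Lemma oplin_add (f h : coef) g : u (fun a => f a + h a) g = u f g + u h g.
Proof.
rewrite -[u f g]mul1r -Lu.
by congr u; apply: functional_extensionality => a; rewrite mul1r.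
Qed.

Lemma oplin0 g : u (fun _ => 0) g = 0.
Proof.
have := oplin_add (fun _ => 0) (fun _ => 0) g.
have -> : (fun _ : mon => (0 : K) + 0) = (fun _ => 0).
  by apply: functional_extensionality => a; rewrite addr0.
by move/eqP; rewrite -subr_eq subrr eq_sym => /eqP.
Qed.

Lemma oplinZ c (f : coef) g : u (fun a => c * f a) g = c * u f g.
Proof.
rewrite -[RHS]addr0 -(oplin0 g) -Lu.
by congr u; apply: functional_extensionality => a; rewrite addr0.
Qed.

Lemma oplinB (f h : coef) g : u (fun a => f a - h a) g = u f g - u h g.
Proof.
rewrite addrC -mulN1r -Lu.
by congr u; apply: functional_extensionality => a; rewrite mulN1r addrC.
Qed.

Lemma oplin_fs : fs_linear u.
Proof. by move=> c f h _ _ g; apply: Lu. Qed.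

End OpLinear.

Lemma mxop_linear s : op_linear (mxop s).
Proof.
move=> c f h g; rewrite /mxop mulr_sumr -big_split; apply: eq_bigr => t _ /=.
by case: ifP => _; rewrite ?mulr0 ?addr0 // mulrDr mulrCA.
Qed.

Lemma Sgen_linear (v : op) : S_gen v -> op_linear v.
Proof.
elim=> {v} [|i|i|u w _ IHu _ IHw|d u _ IH|u w _ IHu _ IHw] c f h g //.
- by rewrite /xop; case: ifP; rewrite // mulr0 addr0.
- by rewrite /op_add IHu IHw mulrDr addrACA.
- by rewrite /op_scale IH mulrDr mulrCA.
- rewrite /op_mul.
  have -> : w (fun a => c * f a + h a) = (fun a => c * w f a + w h a).
    by apply: functional_extensionality => a; apply: IHw.
  exact: IHu.
Qed.

Lemma scalar_linear (c : K) : op_linear (fun f g => c * f g).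
Proof. by move=> d f h g; rewrite mulrDr mulrCA. Qed.

Lemma fs_linearB (u w : op) :
  fs_linear u -> fs_linear w -> fs_linear (fun f g => u f g - w f g).
Proof. by move=> Lu Lw c f h fs hs b; rewrite Lu // Lw // mulrBr opprD addrACA. Qed.

Lemma finsupp_xmon (b : mon) : finsupp (xmon K b).
Proof. by exists [:: b] => a; rewrite /xmon inE; case: (a =P b) => // _; rewrite eqxx. Qed.

Lemma finsupp_sum_xmon (S : seq mon) (w : mon -> K) :
  finsupp (fun a => \sum_(b <- S) w b * xmon K b a).
Proof.
exists S => a; apply: contraR => aS; rewrite big_seq big1 // => b bS.
by rewrite /xmon; case: eqP => [e|_]; [rewrite e bS in aS | rewrite mulr0].
Qed.

Lemma finsupp_xop i (f : coef) : finsupp f -> finsupp (xop i f).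
Proof.
case=> s hs; exists [seq mon_inc a i | a <- s] => a; rewrite /xop.
case: ifP => [ai /hs da|]; last by rewrite eqxx.
by apply/mapP; exists (mon_dec a i) => //; rewrite inc_dec.
Qed.

Lemma finsupp_yop i (f : coef) : finsupp f -> finsupp (yop i f).
Proof.
case=> s hs; exists [seq mon_dec a i | a <- s] => a; rewrite /yop => /hs h.
by apply/mapP; exists (mon_inc a i) => //; rewrite dec_inc.
Qed.

Lemma finsupp0 : finsupp (fun _ : mon => 0 : K).
Proof. by exists [::] => a; rewrite eqxx. Qed.

Lemma fs_linear0 (u : op) g : fs_linear u -> u (fun _ => 0) g = 0.
Proof.
move=> Lu; have := Lu 1 _ _ finsupp0 finsupp0 g.
have -> : (fun a : mon => 1 * (0 : K) + 0) = (fun _ => 0).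
  by apply: functional_extensionality => a; rewrite mul1r addr0.
by rewrite mul1r => /eqP; rewrite -subr_eq subrr eq_sym => /eqP.
Qed.

(* A finitely supported f with support in a duplicate-free list S is the sum
   sum_{b in S} f(b) x^b, so a linear u acts on it through its matrix. *)
Lemma fs_linear_expand (u : op) (S : seq mon) (f : coef) g : fs_linear u -> uniq S ->
  (forall a, f a != 0 -> a \in S) -> u f g = \sum_(b <- S) f b * u (xmon K b) g.
Proof.
move=> Lu uS sf.
have decomp : f = (fun a => \sum_(b <- S) f b * xmon K b a).
  apply: functional_extensionality => a.
  rewrite (eq_bigr (fun b => if a == b then f b else 0)); last first.
    by move=> b _; rewrite /xmon eq_sym; case: eqP; rewrite ?mulr1 ?mulr0.
  by rewrite sum_if_eq //; case: ifP => // aS; apply/eqP; apply: contraFT aS => /sf.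
rewrite {1}decomp; elim: S {uS sf decomp} => [|x S IH].
  have -> : (fun a => \sum_(b <- [::]) f b * xmon K b a) = (fun _ => 0).
    by apply: functional_extensionality => a; rewrite big_nil.
  by rewrite fs_linear0 // big_nil.
have -> : (fun a : mon => \sum_(y <- x :: S) f y * xmon K y a) =
          (fun a => f x * xmon K x a + \sum_(y <- S) f y * xmon K y a).
  by apply: functional_extensionality => a; rewrite big_cons.
rewrite Lu; [|exact: finsupp_xmon|exact: finsupp_sum_xmon].
by rewrite big_cons IH.
Qed.

End Linearity.

Section SAlgebra.
Variables (K : fieldType) (n : nat).
Local Notation mon := (mon n).
Local Notation coef := (coef K n).
Local Notation op := (op K n).

Definition is_mxop (u : op) : Prop := exists s, forall f g, u f g = mxop s f g.

Lemma Sgen_mul_mxop (v : op) : S_gen v -> forall s, is_mxop (fun f => v (mxop s f)).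
Proof.
elim=> {v} [|i|i|u w _ IHu _ IHw|d u _ IH|u w _ IHu _ IHw] s.
- by exists s.
- by eexists => f g; apply: xop_mxop.
- by eexists => f g; apply: yop_mxop.
- have [s1 h1] := IHu s; have [s2 h2] := IHw s.
  by exists (s1 ++ s2) => f g; rewrite mxop_cat /op_add h1 h2.
- have [s1 h1] := IH s.
  by exists (mxscale d s1) => f g; rewrite mxop_scale /op_scale h1.
- have [s1 h1] := IHw s; have [s2 h2] := IHu s1.
  exists s2 => f g; rewrite /op_mul.
  have -> : w (mxop s f) = mxop s1 f by apply: functional_extensionality => a; apply: h1.
  exact: h2.
Qed.

Lemma mxop_mul_Sgen (v : op) : S_gen v -> forall s, is_mxop (fun f => mxop s (v f)).
Proof.
elim=> {v} [|i|i|u w _ IHu _ IHw|d u _ IH|u w _ IHu _ IHw] s.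
- by exists s.
- by eexists => f g; apply: mxop_xop.
- by eexists => f g; apply: mxop_yop.
- have [s1 h1] := IHu s; have [s2 h2] := IHw s.
  exists (s1 ++ s2) => f g; rewrite mxop_cat /op_add -h1 -h2 /=.
  exact: (oplin_add (@mxop_linear K n s)).
- have [s1 h1] := IH s.
  exists (mxscale d s1) => f g; rewrite mxop_scale /op_scale -h1.
  exact: (oplinZ (@mxop_linear K n s)).
- have [s1 h1] := IHu s; have [s2 h2] := IHw s1.
  by exists s2 => f g; rewrite /op_mul h1 h2.
Qed.

(* [w,-] is a derivation, so if the commutators of w with all generators are
   finite matrices then so are its commutators with all of S_n. *)
Lemma comm_Sgen_mxop (w : op) : S_gen w ->
  (forall j, is_mxop (op_comm w (xop j))) -> (forall j, is_mxop (op_comm w (yop j))) ->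
  forall v, S_gen v -> is_mxop (op_comm w v).
Proof.
move=> Sw Hx Hy v.
have Lw := Sgen_linear Sw.
elim=> {v} [|i|i|u v Su IHu Sv IHv|d u Su IH|u v Su IHu Sv IHv] //.
- by exists [::] => f g; rewrite mxop_nil /op_comm /op_add /op_opp /op_mul /op_id subrr.
- have [s1 h1] := IHu; have [s2 h2] := IHv.
  exists (s1 ++ s2) => f g; rewrite mxop_cat -h1 -h2 /op_comm /op_add /op_opp /op_mul.
  by rewrite (oplin_add Lw) opprD addrACA.
- have [s1 h1] := IH.
  exists (mxscale d s1) => f g; rewrite mxop_scale -h1 /op_comm /op_add /op_opp /op_mul /op_scale.
  by rewrite (oplinZ Lw) mulrBr.
- have [s1 h1] := IHu; have [s2 h2] := IHv.
  have [s3 h3] := mxop_mul_Sgen Sv s1; have [s4 h4] := Sgen_mul_mxop Su s2.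
  exists (s3 ++ s4) => f g; rewrite mxop_cat -h3 -h4.
  have -> : mxop s2 f = op_comm w v f by apply: functional_extensionality => a; rewrite h2.
  rewrite -h1 /op_comm /op_add /op_opp /op_mul (oplinB (Sgen_linear Su)).
  by rewrite addrA subrK.
Qed.

Lemma op_comm_eq (w phi v : op) f g : op_eq phi v -> finsupp f -> finsupp (w f) ->
  op_comm w phi f g = op_comm w v f g.
Proof.
move=> e fs ws; rewrite /op_comm /op_add /op_opp /op_mul e //.
by have -> : phi f = v f by apply: functional_extensionality => a; apply: e.
Qed.

Definition lincomb (T : Type) (l : seq T) (c : T -> K) (u : T -> op) : op :=
  foldr (fun t w => op_add (op_scale (c t) (u t)) w) (op_scale 0 (@op_id K n)) l.

Lemma lincombE (T : Type) (l : seq T) c u (f : coef) g :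
  lincomb l c u f g = \sum_(t <- l) c t * u t f g.
Proof.
elim: l => [|t l IH]; first by rewrite big_nil /= /op_scale mul0r.
by rewrite big_cons /= /op_add /op_scale IH.
Qed.

Lemma Sgen_lincomb (T : Type) (l : seq T) c u :
  (forall t, S_gen (u t)) -> S_gen (lincomb l c u).
Proof.
move=> Su; elim: l => [|t l IH] /=; first by apply: S_scale; apply: S_one.
by apply: S_add => //; apply: S_scale.
Qed.

Lemma Sgen_pow (u : op) k : S_gen u -> S_gen (op_pow u k).
Proof. by move=> Su; elim: k => [|k IH]; [apply: S_one | apply: S_mul]. Qed.

Definition EopS k l i : op :=
  op_add (op_mul (op_pow (xop i) k) (op_pow (yop i) l))
         (op_scale (-1) (op_mul (op_pow (xop i) k.+1) (op_pow (yop i) l.+1))).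

Definition EabS (a b : mon) : op :=
  foldr (fun i u => op_mul (EopS (a i) (b i) i) u) (@op_id K n) (enum 'I_n).

Lemma Sgen_EabS a b : S_gen (EabS a b).
Proof.
rewrite /EabS; elim: (enum 'I_n) => [|i l IH] /=; first exact: S_one.
by apply: S_mul => //; apply: S_add; [|apply: S_scale]; apply: S_mul; apply: Sgen_pow;
  constructor.
Qed.

Lemma EabSE a b (f : coef) g : EabS a b f g = Eab a b f g.
Proof.
rewrite /EabS /Eab; elim: (enum 'I_n) f g => [|i l IH] f g //=.
rewrite /op_mul; have -> : foldr (fun i u => op_mul (EopS (a i) (b i) i) u) (@op_id K n) l f =
    foldr (fun i u => op_mul (Eop (a i) (b i) i) u) (@op_id K n) l f.
  by apply: functional_extensionality => h; apply: IH.
by rewrite /EopS /Eop /op_add /op_scale /op_opp mulN1r.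
Qed.

Lemma F_sub_S (u : op) : in_F u -> in_S u.
Proof.
case=> s e; exists (lincomb s (fun t => t.1.1) (fun t => EabS t.1.2 t.2)); split.
  by apply: Sgen_lincomb => t; apply: Sgen_EabS.
move=> f fs g; rewrite e // {e}; elim: s => [|t s IH] /=.
  by rewrite /op_zero /op_scale mul0r.
by rewrite /op_add /op_scale IH EabSE.
Qed.

End SAlgebra.

Section MatrixEntries.
Variables (K : fieldType) (n : nat).
Local Notation mon := (mon n).
Local Notation op := (op K n).

(* The (g,b) matrix entry of u: the coefficient of x^g in u(x^b). *)
Definition mxe (u : op) (g b : mon) : K := u (xmon K b) g.

Definition vanishes_far (N : nat) (u : op) : Prop :=
  forall g b, far N g b -> mxe u g b = 0.

Lemma vanishes_far_mono N N' (u : op) : (N <= N')%N -> vanishes_far N u -> vanishes_far N' u.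
Proof. by move=> le H g b fgb; apply: H; apply: far_le fgb. Qed.

Lemma finite_mx_vanishes (u : op) : finite_mx u -> exists N, vanishes_far N u.
Proof.
case=> s hs; exists (\max_(t <- s) \max_(j < n) maxn (t.1.2 j) (t.2 j))%N => g b.
case/existsP=> j fj; rewrite /mxe hs; last exact: finsupp_xmon.
rewrite /mxop big_seq big1 // => t ts.
case: (g =P t.1.2) => [eg|]; last by rewrite mulr0.
rewrite /xmon; case: (t.2 =P b) => [eb|]; last by rewrite mulr0.
have le_t := leq_trans (@leq_bigmax _ (fun j => maxn (t.1.2 j) (t.2 j)) j)
  (@leq_bigmax_seq _ s xpredT (fun t : K * mon * mon => \max_(j < n) maxn (t.1.2 j) (t.2 j))%N
     t ts isT).
move: fj; rewrite eg -eb !ltnNge.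
by rewrite (leq_trans (leq_maxl _ _) le_t) (leq_trans (leq_maxr _ _) le_t).
Qed.

(* Conversely a linear operator whose entries vanish far from the origin is
   the finite matrix of its entries over box N x box N. *)
Lemma vanishes_finite_mx N (u : op) : fs_linear u -> vanishes_far N u -> finite_mx u.
Proof.
move=> Lu Hu.
exists [seq (mxe u p.1 p.2, p.1, p.2) | p <- [seq (x, y) | x <- box n N, y <- box n N]].
move=> f fs g; have [S hS] := fs.
rewrite (fs_linear_expand _ Lu (undup_uniq S)) => [|a /hS]; last by rewrite mem_undup.
rewrite /mxop big_map big_allpairs.
have -> : \sum_(x <- box n N) \sum_(y <- box n N)
    mxe u (x, y).1 (x, y).2 * (if g == (x, y).1 then f (x, y).2 else 0)
  = \sum_(x <- box n N) (if g == x then \sum_(y <- box n N) mxe u g y * f y else 0).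
  apply: eq_bigr => x _ /=; case: (g =P x) => [->//|_].
  by rewrite big1 // => y _; rewrite mulr0.
rewrite sum_if_eq ?box_uniq //; case: ifP => gb; last first.
  rewrite big1 // => y _; rewrite -/(mxe u g y) Hu ?mulr0 //.
  by apply: contraFT gb => /near_in_box[].
rewrite [LHS](eq_bigr (fun y => mxe u g y * f y)) => [|y _]; last by rewrite mulrC.
apply: sum_support_eq; rewrite ?undup_uniq ?box_uniq // => y.
case: (f y =P 0) => [->|/eqP fy]; first by rewrite mulr0 eqxx.
case: (boolP (far N g y)) => [/Hu ->|/near_in_box[_ ->]]; first by rewrite mul0r eqxx.
by rewrite mem_undup hS.
Qed.

Lemma comm_vanishes_far (phi : op) :
  (forall i : 'I_n, in_F (op_comm (xop i) phi) /\ in_F (op_comm (yop i) phi)) ->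
  exists N, forall i,
    vanishes_far N (op_comm (xop i) phi) /\ vanishes_far N (op_comm (yop i) phi).
Proof.
move=> H.
have HN i : exists N, forall N', (N <= N')%N ->
    vanishes_far N' (op_comm (xop i) phi) /\ vanishes_far N' (op_comm (yop i) phi).
  case: (H i) => /in_FE /finite_mx_vanishes [N1 h1] /in_FE /finite_mx_vanishes [N2 h2].
  exists (maxn N1 N2) => N'; rewrite geq_max => /andP[le1 le2].
  by split; [apply: vanishes_far_mono le1 h1 | apply: vanishes_far_mono le2 h2].
have [Nf hN] := fin_all_exists HN.
by exists (\max_(i < n) Nf i)%N => i; apply: hN; apply: leq_bigmax.
Qed.

End MatrixEntries.

Lemma xop_xmon (K : fieldType) (n : nat) i (b : mon n) :
  xop i (xmon K b) = xmon K (mon_inc b i).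
Proof.
apply: functional_extensionality => a; rewrite /xop /xmon.
case: ifP => h; first by rewrite eq_dec_inc.
by case: eqP => // e; move: h; rewrite e inc_pos.
Qed.

Lemma yop_xmon (K : fieldType) (n : nat) i (b : mon n) :
  yop i (xmon K b) = if (0 < b i)%N then xmon K (mon_dec b i) else (fun _ => 0).
Proof.
by apply: functional_extensionality => a; rewrite /yop /xmon inc_eq; case: (0 < b i)%N.
Qed.

Section ShiftInvariance.
Variables (K : fieldType) (n : nat) (phi : op K n) (N : nat).
Hypothesis Lphi : fs_linear phi.
Hypothesis HX : forall i, vanishes_far N (op_comm (xop i) phi).
Hypothesis HY : forall i, vanishes_far N (op_comm (yop i) phi).
Local Notation mon := (mon n).
Local Notation M := (mxe phi).

(* x_i phi = phi x_i and y_i phi = phi y_i, read on the entry (g,b). *)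
Lemma mxe_xop i g b : far N g b ->
  (if (0 < g i)%N then M (mon_dec g i) b else 0) = M g (mon_inc b i).
Proof.
move/(HX i)/eqP; rewrite /mxe /op_comm /op_add /op_opp /op_mul subr_eq0 xop_xmon.
by move/eqP.
Qed.

Lemma mxe_yop i g b : far N g b ->
  M (mon_inc g i) b = if (0 < b i)%N then M g (mon_dec b i) else 0.
Proof.
move/(HY i)/eqP; rewrite /mxe /op_comm /op_add /op_opp /op_mul subr_eq0 yop_xmon => /eqP.
by rewrite /yop => ->; case: ifP => // _; rewrite fs_linear0.
Qed.

Lemma shift1 i g b : far N g b -> M g b = M (mon_inc g i) (mon_inc b i).
Proof.
move=> fgb; have := mxe_xop i (far_mono (mon_inc_ge g i) (fun j => leqnn _) fgb).
by rewrite inc_pos dec_inc.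
Qed.

Lemma shiftk i k g b : far N g b -> M g b = M (mon_addn g i k) (mon_addn b i k).
Proof.
move=> fgb; elim: k => [|k IH]; first by rewrite !mon_addn0.
rewrite IH !mon_addnS; apply: shift1.
by apply: far_mono fgb; apply: mon_addn_ge.
Qed.

Lemma shiftv (t : mon) g b : far N g b ->
  M g b = M [ffun j => g j + t j]%N [ffun j => b j + t j]%N.
Proof.
pose shift_along (l : seq 'I_n) (h : mon) := foldr (fun i h' => mon_addn h' i (t i)) h l.
have shift_alongE l h j : shift_along l h j = (h j + count_mem j l * t j)%N.
  elim: l => [|i l IH] /=; first by rewrite mul0n addn0.
  rewrite ffunE IH; case: (j =P i) => [->|/eqP ne]; first by rewrite eqxx mulSn addnA addnAC.
  by rewrite eq_sym (negbTE ne).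
have E (h : mon) : [ffun j => h j + t j]%N = shift_along (enum 'I_n) h.
  apply/ffunP => j; rewrite shift_alongE ffunE (count_uniq_mem _ (enum_uniq _)) mem_enum.
  by rewrite mul1n.
move=> fgb; rewrite !E; elim: (enum 'I_n) => [|i l IH] //=.
rewrite IH; apply: shiftk; apply: far_mono fgb => j; rewrite shift_alongE; apply: leq_addr.
Qed.

Definition mon_canon (g b : mon) : mon := [ffun j => g j - minn (g j) (b j) + N.+1]%N.

Lemma mon_canon_far (g b : mon) j : (N < mon_canon g b j)%N.
Proof. by rewrite ffunE addnS ltnS leq_addl. Qed.

Lemma mxe_canon g b : (0 < n)%N -> far N g b -> M g b = M (mon_canon g b) (mon_canon b g).
Proof.
move=> n0 fgb; rewrite (shiftv [ffun _ => N.+1] fgb).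
pose mu : mon := [ffun j => minn (g j) (b j)].
have fc : far N (mon_canon g b) (mon_canon b g).
  exact: farl (mon_canon_far _ _ (Ordinal n0)).
rewrite (shiftv mu fc); congr M; apply/ffunP => j; rewrite !ffunE.
- by rewrite addnAC subnK // geq_minl.
- by rewrite [minn (b j) _]minnC addnAC subnK // geq_minr.
Qed.

Lemma zeroX g b i : far N g (mon_dec b i) -> g i = 0%N -> (0 < b i)%N -> M g b = 0.
Proof. by move=> fgb gi bi; have := mxe_xop i fgb; rewrite inc_dec // gi => <-. Qed.

Lemma zeroY g b i : far N (mon_dec g i) b -> b i = 0%N -> (0 < g i)%N -> M g b = 0.
Proof. by move=> fgb bi gi; have := mxe_yop i fgb; rewrite inc_dec // bi => ->. Qed.

(* Keeping coordinate k far, shift coordinate j down to min(g_j,b_j): if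
   g_j <> b_j the entry vanishes. *)
Lemma offdiag_zero (j k : 'I_n) (g b : mon) : k != j -> (N < g k)%N -> g j != b j -> M g b = 0.
Proof.
move=> kj gk gbj; pose m := minn (g j) (b j).
pose g' := mon_subn g j m; pose b' := mon_subn b j m.
have g'k : (N < g' k)%N by rewrite ffunE (negbTE kj).
have <- : mon_addn g' j m = g by apply: mon_subnK; apply: geq_minl.
have <- : mon_addn b' j m = b by apply: mon_subnK; apply: geq_minr.
rewrite -shiftk; last exact: farl g'k.
have g'j : g' j = (g j - m)%N by rewrite ffunE eqxx.
have b'j : b' j = (b j - m)%N by rewrite ffunE eqxx.
case: (ltngtP (g j) (b j)) => h; last by rewrite h eqxx in gbj.
- apply: (zeroX (i := j)); first exact: farl g'k.
    by rewrite g'j /m (minn_idPl (ltnW h)) subnn.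
  by rewrite b'j /m (minn_idPl (ltnW h)) subn_gt0.
- have d'k : (N < mon_dec g' j k)%N by rewrite ffunE (negbTE kj).
  apply: (zeroY (i := j)); first exact: farl d'k.
    by rewrite b'j /m (minn_idPr (ltnW h)) subnn.
  by rewrite g'j /m (minn_idPr (ltnW h)) subn_gt0.
Qed.

Lemma far_diag (n1 : (1 < n)%N) g b : far N g b ->
  M g b = if g == b then M [ffun _ => N.+1] [ffun _ => N.+1] else 0.
Proof.
move=> fgb; rewrite (mxe_canon (ltnW n1) fgb).
case: (g =P b) => [<-|/eqP ne].
  by congr M; apply/ffunP => j; rewrite !ffunE minnn subnn.
have [j gj] : exists j, g j != b j.
  by apply/existsP; apply: contraR ne => /existsPn h; apply/eqP/ffunP => j; apply/eqP;
    move: (h j); rewrite negbK.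
have [k kj] : exists k : 'I_n, k != j.
  have [->|ne0] := eqVneq j (Ordinal (ltnW n1)); first by exists (Ordinal n1).
  by exists (Ordinal (ltnW n1)); rewrite eq_sym.
apply: (offdiag_zero kj (mon_canon_far _ _ _)).
by rewrite !ffunE eqn_add2r minnC; apply: contra gj => /eqP; lia.
Qed.

Lemma KF_of_far_diag : (1 < n)%N -> in_KF phi.
Proof.
move=> n1; pose c := M [ffun _ => N.+1] [ffun _ => N.+1].
exists c, (fun f g => phi f g - c * f g); split; last first.
  by move=> f fs g; rewrite /op_add /op_scale /op_id addrC subrK.
apply/in_FE; apply: (vanishes_finite_mx (N := N)).
  exact: fs_linearB Lphi (oplin_fs (scalar_linear c)).
move=> g b fgb; rewrite /mxe -/(M g b) (far_diag n1 fgb) /xmon.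
by case: eqP => _; rewrite ?mulr1 ?mulr0 subrr.
Qed.

End ShiftInvariance.

Lemma sum_iota_pick (R : pzSemiRingType) (F : nat -> R) (c : bool) d m :
  \sum_(k <- iota 0 m) F k * (if c && (d == k) then 1 else 0) = if c && (d < m)%N then F d else 0.
Proof.
case: c => /=; last by rewrite big1 // => k _; rewrite mulr0.
rewrite (eq_bigr (fun k => if d == k then F k else 0)); last first.
  by move=> k _; case: ifP; rewrite ?mulr1 ?mulr0.
by rewrite sum_if_eq ?iota_uniq // mem_iota.
Qed.

Section OneVariable.
Variables (K : fieldType) (phi : op K 1) (N : nat).
Hypothesis Lphi : fs_linear phi.
Hypothesis HX : forall i, vanishes_far N (op_comm (xop i) phi).
Hypothesis HY : forall i, vanishes_far N (op_comm (yop i) phi).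
Local Notation mon := (mon 1).
Local Notation M := (mxe phi).
Local Notation o := (ord0 : 'I_1).

Lemma mon1 (g : mon) : g = [ffun _ => g o].
Proof. by apply/ffunP => j; rewrite ffunE (ord1 j). Qed.

Lemma mon1_eq (g b : mon) : (g == b) = (g o == b o).
Proof. by apply/eqP/eqP => [->//|e]; rewrite (mon1 g) (mon1 b) e. Qed.

Definition Pdiag k := M [ffun _ => (k + N.+1)%N] [ffun _ => N.+1].
Definition Qdiag k := M [ffun _ => N.+1] [ffun _ => (k + N.+1)%N].

Lemma mxe_one g b : far N g b ->
  M g b = if (b o <= g o)%N then Pdiag (g o - b o) else Qdiag (b o - g o).
Proof.
move=> fgb; rewrite (mxe_canon HX (isT : (0 < 1)%N) fgb) (mon1 (mon_canon N g b)).
rewrite (mon1 (mon_canon N b g)) !ffunE /Pdiag /Qdiag minnC.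
by case: (leqP (b o) (g o)) => h; rewrite ?(minn_idPr h) ?(minn_idPl (ltnW h)) subnn add0n.
Qed.

Lemma shift_const k : mon_addn [ffun _ : 'I_1 => k] o N.+1 = [ffun _ => (k + N.+1)%N].
Proof. by apply/ffunP => j; rewrite !ffunE (ord1 j) eqxx. Qed.

(* The diagonals beyond N + 1 vanish: shift the entry down until one exponent
   is zero. *)
Lemma Pdiag0 k : (N.+1 < k)%N -> Pdiag k = 0.
Proof.
move=> hk; have fk : (N < [ffun _ : 'I_1 => k] o)%N by rewrite ffunE ltnW.
have -> : Pdiag k = M (mon_addn [ffun _ => k] o N.+1) (mon_addn [ffun _ => 0%N] o N.+1).
  by rewrite !shift_const.
rewrite -(shiftk HX); last exact: farl fk.
apply: (zeroY Lphi HY (i := o)); rewrite ?ffunE //; last by apply: leq_ltn_trans hk.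
by apply: (@farl _ N _ _ o); rewrite !ffunE eqxx -ltnS prednK // (leq_ltn_trans _ hk).
Qed.

Lemma Qdiag0 k : (N.+1 < k)%N -> Qdiag k = 0.
Proof.
move=> hk; have fk : (N < [ffun _ : 'I_1 => k] o)%N by rewrite ffunE ltnW.
have -> : Qdiag k = M (mon_addn [ffun _ => 0%N] o N.+1) (mon_addn [ffun _ => k] o N.+1).
  by rewrite !shift_const.
rewrite -(shiftk HX); last exact: farr fk.
apply: (zeroX HX (i := o)); rewrite ?ffunE //; last by apply: leq_ltn_trans hk.
by apply: (@farr _ N _ _ o); rewrite !ffunE eqxx -ltnS prednK // (leq_ltn_trans _ hk).
Qed.

Definition psi : op K 1 :=
  op_add (lincomb (iota 0 N.+2) Pdiag (op_pow (xop o)))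
         (lincomb (iota 0 N.+2) (fun k => Qdiag k.+1) (fun k => op_pow (yop o) k.+1)).

Lemma Sgen_psi : S_gen psi.
Proof. by apply: S_add; apply: Sgen_lincomb => k; apply: Sgen_pow; constructor. Qed.

Lemma mxe_xpow k (b g : mon) :
  mxe (op_pow (@xop K 1 o) k) g b = if (b o <= g o)%N && (g o - b o == k)%N then 1 else 0.
Proof.
rewrite /mxe xpowE /xmon mon1_eq ffunE eqxx.
have -> : ((b o <= g o) && (g o - b o == k))%N = (if k <= g o then g o - k == b o else false)%N.
  by case: ifP => ?; apply/idP/idP; lia.
by case: ifP.
Qed.

Lemma mxe_ypow k (b g : mon) :
  mxe (op_pow (@yop K 1 o) k.+1) g b = if (g o < b o)%N && ((b o - g o).-1 == k)%N then 1 else 0.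
Proof.
rewrite /mxe ypowE /xmon mon1_eq ffunE eqxx.
by have -> : ((g o < b o) && ((b o - g o).-1 == k))%N = (g o + k.+1 == b o)%N
  by apply/idP/idP; lia.
Qed.

Lemma mxe_psi g b : far N g b -> mxe psi g b = M g b.
Proof.
move=> fgb; rewrite mxe_one // /mxe /psi /op_add !lincombE.
under eq_bigr do rewrite -/(mxe _ g b) mxe_xpow.
under [X in _ + X = _]eq_bigr do rewrite -/(mxe _ g b) mxe_ypow.
rewrite !sum_iota_pick; case: (leqP (b o) (g o)) => h /=.
  rewrite addr0; case: ifP => // /negbT; rewrite -leqNgt => hk.
  by rewrite Pdiag0.
rewrite add0r; have hp : (0 < b o - g o)%N by rewrite subn_gt0.
case: ifP => [_|/negbT]; first by rewrite prednK.
by rewrite -leqNgt => hk; rewrite Qdiag0 // -(prednK hp) ltnS ltnW.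
Qed.

(* phi - psi is in F_1, hence in S_1, so phi is in S_1. *)
Lemma S_of_far_toeplitz : in_S phi.
Proof.
pose D : op K 1 := fun f g => phi f g - psi f g.
have [v [Sv eDv]] : in_S D.
  apply/F_sub_S/in_FE; apply: (vanishes_finite_mx (N := N)).
    exact: fs_linearB Lphi (oplin_fs (Sgen_linear Sgen_psi)).
  by move=> g b fgb; rewrite /mxe /D -/(mxe psi g b) mxe_psi // subrr.
exists (op_add psi v); split; first exact: S_add Sgen_psi Sv.
by move=> f fs g; rewrite /op_add -eDv // /D addrC subrK.
Qed.

End OneVariable.

Lemma in_F_comm_eq (K : fieldType) (n : nat) (w phi v : op K n) :
  (forall f, finsupp f -> finsupp (w f)) -> op_eq phi v -> is_mxop (op_comm w v) ->
  in_F (op_comm w phi).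
Proof.
move=> ws e [s hs]; apply/in_FE; exists s => f fs g.
by rewrite (op_comm_eq _ e fs (ws f fs)) hs.
Qed.

(* Converse for n > 1: for w in S_n and u in F_n, [w, c + u] = [w, u] lies
   in F_n (this holds for every n). *)
Lemma comm_KF (K : fieldType) (n : nat) (w phi : op K n) : S_gen w ->
  (forall f, finsupp f -> finsupp (w f)) -> in_KF phi -> in_F (op_comm w phi).
Proof.
move=> Sw ws [c [u [/in_FE [s hs] e]]].
have E f : finsupp f -> forall b, phi f b = c * f b + mxop s f b.
  by move=> fs b; rewrite e // /op_add /op_scale /op_id hs.
have [sl hl] := Sgen_mul_mxop Sw s; have [sr hr] := mxop_mul_Sgen Sw s.
apply/in_FE; exists (sl ++ mxscale (-1) sr) => f fs b.
rewrite mxop_sub /op_comm /op_add /op_opp /op_mul (E (w f) (ws f fs)).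
have -> : phi f = (fun a => c * f a + mxop s f a).
  by apply: functional_extensionality => a; apply: E.
by rewrite (Sgen_linear Sw) hl hr opprD addrACA subrr add0r.
Qed.

(* Converse for n = 1: [x,-] and [y,-] map S_1 into F_1, as [x,y] = -E_00. *)
Section OneVariableConverse.
Variable K : fieldType.
Local Notation mon := (mon 1).
Local Notation op := (op K 1).
Local Notation o := (ord0 : 'I_1).

Let z : mon := [ffun _ => 0%N].

Lemma mon1_zero (g : mon) : (0 < g o)%N = (g != z).
Proof.
rewrite lt0n; congr negb; apply/eqP/eqP => [g0|->]; last by rewrite ffunE.
by apply/ffunP => j; rewrite ffunE (ord1 j).
Qed.

Lemma comm_self_mxop (u : op) : is_mxop (op_comm u u).
Proof. by exists [::] => f g; rewrite mxop_nil /op_comm /op_add /op_opp /op_mul subrr. Qed.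

Lemma comm_xy_mxop : is_mxop (op_comm (xop o) (yop o) : op).
Proof.
exists [:: ((-1 : K), z, z)] => f g.
rewrite /mxop big_cons big_nil /= addr0 /op_comm /op_add /op_opp /op_mul /xop /yop.
rewrite inc_pos dec_inc mon1_zero; case: eqP => [->|/eqP gz]; first by rewrite sub0r mulN1r.
by rewrite /= inc_dec ?subrr ?mulr0 // mon1_zero.
Qed.

Lemma comm_yx_mxop : is_mxop (op_comm (yop o) (xop o) : op).
Proof.
exists [:: ((1 : K), z, z)] => f g.
rewrite /mxop big_cons big_nil /= addr0 /op_comm /op_add /op_opp /op_mul /xop /yop.
rewrite inc_pos dec_inc mon1_zero; case: eqP => [->|/eqP gz]; first by rewrite subr0 mul1r.
by rewrite /= inc_dec ?subrr ?mulr0 // mon1_zero.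
Qed.

Lemma comm_S1 (phi : op) i : in_S phi ->
  in_F (op_comm (xop i) phi) /\ in_F (op_comm (yop i) phi).
Proof.
case=> v [Sv e]; rewrite (ord1 i); split; apply: in_F_comm_eq e _.
- exact: finsupp_xop.
- apply: comm_Sgen_mxop Sv => [|j|j]; rewrite ?(ord1 j); first exact: S_x.
  + exact: comm_self_mxop.
  + exact: comm_xy_mxop.
- exact: finsupp_yop.
- apply: comm_Sgen_mxop Sv => [|j|j]; rewrite ?(ord1 j); first exact: S_y.
  + exact: comm_yx_mxop.
  + exact: comm_self_mxop.
Qed.

End OneVariableConverse.

Theorem corollary6p7 (K : fieldType) (charK0 : [pchar K] =i pred0)
  (n : nat) (n_gt0 : (0 < n)%N) (phi : op K n) :
  is_End phi ->
  ((forall i : 'I_n, in_F (op_comm (xop i) phi) /\ in_F (op_comm (yop i) phi))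
   <-> (if n == 1%N then in_S phi else in_KF phi)).
Proof.
case=> _ Lphi; split.
- move=> /comm_vanishes_far [N HN].
  have HX i := (HN i).1; have HY i := (HN i).2.
  case: eqP => [n1|n1].
    by subst n; exact: S_of_far_toeplitz Lphi HX HY.
  by apply: KF_of_far_diag Lphi HX HY _; rewrite ltn_neqAle eq_sym n_gt0 andbT; apply/eqP.
- case: eqP => [n1 HS i|_ HKF i].
    by subst n; exact: comm_S1.
  by split; apply: comm_KF HKF; [exact: S_x | exact: finsupp_xop | exact: S_y | exact: finsupp_yop].
Qed.
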